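(* Let $r,n\in\mathbb{N}$ with $r\leq n$, and let $\mathbf{s}=(s_1,\ldots,s_r)$ and $\mathbf{t}=(t_1,\ldots,t_r)$ be $r$-tuples of positive integers such that $\mathbf{s}\geq\mathbf{t}$. Then $\overline{H}_n(s_1,\ldots,s_r)\leq\overline{H}_n(t_1,\ldots,t_r)$.
   Context: $\mathbb{N}$ is the set of positive integers. $\overline{H}_n(s_1,\ldots,s_r)=\sum_{0\leq k_1<\cdots<k_r\leq n-1}\prod_{j=1}^r (2k_j+1)^{-s_j}$. For $r$-tuples of positive integers, $\mathbf{s}\geq\mathbf{t}$ means: $s_1+\cdots+s_r\geq t_1+\cdots+t_r$, and there is some $0\leq l\leq r-1$ with $s_i\leq t_i$ for $1\leq i\leq l$ and $s_i\geq t_i$ for $l+1\leq i\leq r$. *)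

From mathcomp Require Import all_boot all_order all_algebra.
Set Implicit Arguments. Unset Strict Implicit. Unset Printing Implicit Defensive.
Import Order.TTheory GRing.Theory Num.Theory.
Local Open Scope ring_scope.

(* Hbar_n(s_1,...,s_r) = sum over 0 <= k_1 < ... < k_r <= n-1 of
   prod_j (2 k_j + 1)^(-s_j).  Indices j are 0-based: j : 'I_r.
   The sum ranges over strictly increasing maps k : 'I_r -> 'I_n. *)
Definition strict_incr (r n : nat) (k : {ffun 'I_r -> 'I_n}) : bool :=
  [forall i : 'I_r, forall j : 'I_r, (i < j)%N ==> (k i < k j)%N].

Definition Hbar (n r : nat) (s : 'I_r -> nat) : rat :=
  \sum_(k : {ffun 'I_r -> 'I_n} | strict_incr k)
     \prod_(j < r) (((2 * k j + 1)%N)%:R ^- (s j)).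

Definition tuple_ge (r : nat) (s t : 'I_r -> nat) : Prop :=
  (\sum_(i < r) t i <= \sum_(i < r) s i)%N /\
  exists l : nat, (l <= r.-1)%N /\
    (forall i : 'I_r, (i < l)%N -> (s i <= t i)%N) /\
    (forall i : 'I_r, (l <= i)%N -> (t i <= s i)%N).

(* The comparison holds term by term.  For a strictly increasing k the bases
   b_j = 2 k_j + 1 increase, so with the split index l of s >= t every index
   satisfies either b_j <= b_l and s_j <= t_j, or b_l <= b_j and t_j <= s_j.
   In both cases b_j^t_j b_l^s_j <= b_j^s_j b_l^t_j; multiplying over j and
   cancelling b_l^(sum t) <= b_l^(sum s) gives prod b^t <= prod b^s, i.e.
   prod b^-s <= prod b^-t. *)

From mathcomp Require Import all_boot all_order all_algebra.
Import Order.TTheory GRing.Theory Num.Theory.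
Local Open Scope ring_scope.

Lemma leq_wexp2r (e m n : nat) : (m <= n)%N -> (m ^ e <= n ^ e)%N.
Proof. by case: e => [|e] // le_mn; rewrite leq_exp2r. Qed.

Lemma leq_pow_pivot_exchange (b c s t : nat) :
  (b <= c)%N -> (s <= t)%N -> (b ^ t * c ^ s <= b ^ s * c ^ t)%N.
Proof.
move=> le_bc /subnKC <-; set d := (t - s)%N.
rewrite !expnD -mulnA leq_mul2l [(b ^ d * _)%N]mulnC leq_mul2l.
by rewrite leq_wexp2r ?orbT.
Qed.

Lemma leq_prod_pow_pivot (I : finType) (b s t : I -> nat) (c : nat) :
  (0 < c)%N ->
  (forall i, (b i <= c /\ s i <= t i) \/ (c <= b i /\ t i <= s i))%N ->
  (\sum_i t i <= \sum_i s i)%N ->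
  (\prod_i b i ^ t i <= \prod_i b i ^ s i)%N.
Proof.
move=> c_gt0 pivot le_sum.
have exchange i : (b i ^ t i * c ^ s i <= b i ^ s i * c ^ t i)%N.
  case: (pivot i) => [[le_bc le_st] | [le_cb le_ts]].
    exact: leq_pow_pivot_exchange.
  by rewrite mulnC [X in (_ <= X)%N]mulnC leq_pow_pivot_exchange.
have := @leq_prod _ (index_enum I) predT _ _ (fun i _ => exchange i).
rewrite !big_split /= -!expn_sum => exchanged.
have ct_gt0 : (0 < c ^ \sum_i t i)%N by rewrite expn_gt0 c_gt0.
rewrite -(leq_pmul2r ct_gt0); apply: leq_trans exchanged.
by rewrite leq_mul2l leq_pexp2l ?orbT.
Qed.

Lemma prodr_natXV (F : fieldType) (I : finType) (b e : I -> nat) :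
  \prod_i (b i)%:R ^- e i = ((\prod_i b i ^ e i)%N%:R)^-1 :> F.
Proof. by rewrite prodfV natr_prod; congr _^-1; apply: eq_bigr => i _; rewrite natrX. Qed.

Lemma strict_incr_homo (r n : nat) (k : {ffun 'I_r -> 'I_n}) :
  strict_incr k -> {homo k : i j / (i <= j)%N}.
Proof.
move=> /forallP k_incr i j; rewrite leq_eqVlt => /orP[/eqP/val_inj -> // | lt_ij].
exact/ltnW/(implyP (forallP (k_incr i) j)).
Qed.

Lemma Hbar_term_le (r n : nat) (s t : 'I_r -> nat) (k : {ffun 'I_r -> 'I_n}) :
  (0 < r)%N -> tuple_ge s t -> strict_incr k ->
  \prod_(j < r) ((2 * k j + 1)%N)%:R ^- s j
    <= \prod_(j < r) ((2 * k j + 1)%N)%:R ^- t j :> rat.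
Proof.
move=> r_gt0 [le_sum [l [le_l_r [head_le tail_ge]]]] /strict_incr_homo k_mono.
have lt_l_r : (l < r)%N by rewrite (leq_ltn_trans le_l_r) // prednK.
pose b j := (2 * k j + 1)%N.
have b_mono (i j : 'I_r) : (i <= j)%N -> (b i <= b j)%N.
  by move=> le_ij; rewrite /b leq_add2r leq_mul2l k_mono.
have b_gt0 j : (0 < b j)%N by rewrite /b addn1.
rewrite !prodr_natXV lef_pV2 ?posrE ?ltr0n ?prodn_gt0 ?ler_nat // => [|j|j];
  rewrite ?expn_gt0 ?b_gt0 //.
apply: (@leq_prod_pow_pivot _ _ _ _ (b (Ordinal lt_l_r))) => // j.
case: (ltnP j l) => [lt_jl | le_lj]; [left | right].
  by rewrite head_le // b_mono // ltnW.
by rewrite tail_ge // b_mono.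
Qed.

Theorem lemma2p2 (r n : nat) (s t : 'I_r -> nat) :
  (0 < r)%N -> (0 < n)%N -> (r <= n)%N ->
  (forall i, (0 < s i)%N) -> (forall i, (0 < t i)%N) ->
  tuple_ge s t ->
  Hbar n s <= Hbar n t.
Proof.
move=> r_gt0 _ _ _ _ ge_st.
by apply: ler_sum => k; apply: Hbar_term_le.
Qed.
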